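(* Let $\mathcal K=(\mathcal T,\mathcal B)$ be a consistent $\mathcal{BALC}$ knowledge base, $C,D$ $\mathcal{ALC}$ concepts, and $\kappa,\lambda$ contexts with $P_{\mathcal B}(\lambda)>0$. Then $P_{\mathcal K}((C\sqsubseteq D)^\kappa\mid\lambda)>0$ if and only if $P_{\mathcal K}((C\sqsubseteq D)^{\lambda\wedge\kappa})>1-P_{\mathcal B}(\lambda)$.
   Context: $V$ is a finite set of random variables, each with a finite value set; a world $\omega$ assigns a value to each variable. A Bayesian network $\mathcal B$ over $V$ defines $P_{\mathcal{B}}(\omega)=\prod_{X\in V}P(X=\omega(X)\mid \pi(X)=\omega(\pi(X)))$. A primitive context is a set of pairs $(X,x)$, $x$ a value of $X$; $\omega\models\kappa$ iff $\omega(X)=x$ for all $(X,x)\in\kappa$. A complex context is a finite nonempty set of primitive contexts, satisfied by $\omega$ iff $\omega$ satisfies one of them; $\phi\wedge\psi:=\{\kappa\cup\lambda\mid\kappa\in\phi,\lambda\in\psi\}$. $P_{\mathcal B}(\phi)=\sum_{\omega\models\phi}P_{\mathcal B}(\omega)$. $\mathcal T$ is a finite set of contextual GCIs. A $V$-interpretation $\mathcal{V}=(\Delta^{\mathcal V},\cdot^{\mathcal V},v^{\mathcal V})$ is an $\mathcal{ALC}$ interpretation plus a world; $\mathcal V\models\alpha^\phi$ iff $v^{\mathcal V}\not\models\phi$ or the $\mathcal{ALC}$ interpretation satisfies $\alpha$. A probabilistic interpretation $\mathcal P=(\mathcal J,P_{\mathcal J})$ is a finite set of $V$-interpretations with a distribution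 assigning each positive probability; it is a model of $\mathcal K$ iff every member satisfies all axioms of $\mathcal T$ and $\sum_{\mathcal V\in\mathcal J,\,v^{\mathcal V}=\omega}P_{\mathcal J}(\mathcal V)=P_{\mathcal B}(\omega)$ for every world $\omega$; $\mathcal K$ is consistent iff it has a model. $P_{\mathcal K}((C\sqsubseteq D)^\phi)=\inf_{\mathcal P\models\mathcal K}\sum_{\mathcal V\in\mathcal J,\ \mathcal V\models(C\sqsubseteq D)^\phi}P_{\mathcal J}(\mathcal V)$; for $P_{\mathcal B}(\lambda)>0$, $P_{\mathcal K}((C\sqsubseteq D)^\kappa\mid\lambda)=\inf_{\mathcal P\models\mathcal K}\frac{1}{P_{\mathcal B}(\lambda)}\sum_{\mathcal V\in\mathcal J,\ v^{\mathcal V}\models\lambda,\ \mathcal V\models(C\sqsubseteq D)^\kappa}P_{\mathcal J}(\mathcal V)$. *)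

From HB Require Import structures.
From mathcomp Require Import all_boot all_order all_algebra.
From mathcomp Require Import boolp classical_sets reals.
Unset Printing Implicit Defensive.
Import Order.TTheory GRing.Theory Num.Theory.
Local Open Scope ring_scope.

Section BALC.
Variable R : realType.
(* Random variables: a finite type V; each X has a finite value set Val X. *)
Variable V : finType.
Variable Val : V -> finType.

Local Notation world := {dffun forall X : V, Val X}.

(* Bayesian network: a DAG of parents with conditional probability tables.
   The CPT of X is given as a function of the world that only depends on the
   values of the parents of X. *)
Record BN := mkBN {
  parents : V -> {set V};
  bn_acyclic : exists rk : V -> nat, forall X Y, Y \in parents X -> (rk Y < rk X)%N;
  cpt : forall X : V, world -> Val X -> R;
  cpt_local : forall X (w w' : world),
      (forall Y, Y \in parents X -> w Y = w' Y) -> forall x, cpt X w x = cpt X w' x;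
  cpt_ge0 : forall X w x, 0 <= cpt X w x;
  cpt_sum1 : forall X w, \sum_(x : Val X) cpt X w x = 1
}.


Definition PB (B : BN) (w : world) : R := \prod_(X : V) cpt B X w (w X).

Definition pctx := {set {X : V & Val X}}.
Definition cctx := {set pctx}.               (* complex context (nonempty required where used) *)

Definition psat (w : world) (k : pctx) : bool :=
  [forall p in k, w (tag p) == tagged p].
Definition csat (w : world) (phi : cctx) : bool := [exists k in phi, psat w k].

Definition cand (phi psi : cctx) : cctx := [set k :|: l | k in phi, l in psi].

Definition PBc (B : BN) (phi : cctx) : R := \sum_(w : world | csat w phi) PB B w.

Variables NC NR : Type.
Inductive concept :=
  | CTop | CBot | CName of NC | CNeg of concept
  | CAnd of concept & concept | COr of concept & concept
  | CEx of NR & concept | CAll of NR & concept.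

Record cgci := CGCI { gci_lhs : concept; gci_rhs : concept; gci_ctx : cctx }.

Record VInterp := mkVI {
  dom : Type;
  dom_inhabited : inhabited dom;
  iconc : NC -> dom -> Prop;
  irole : NR -> dom -> dom -> Prop;
  vworld : world
}.

Fixpoint csem (I : VInterp) (C : concept) : dom I -> Prop :=
  match C with
  | CTop => fun _ => True
  | CBot => fun _ => False
  | CName A => iconc I A
  | CNeg C => fun d => ~ csem I C d
  | CAnd C1 C2 => fun d => csem I C1 d /\ csem I C2 d
  | COr C1 C2 => fun d => csem I C1 d \/ csem I C2 d
  | CEx r C => fun d => exists e, irole I r d e /\ csem I C e
  | CAll r C => fun d => forall e, irole I r d e -> csem I C e
  end.

Definition sat_gci (I : VInterp) (a : cgci) : Prop :=
  ~~ csat (vworld I) (gci_ctx a) \/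
  (forall d, csem I (gci_lhs a) d -> csem I (gci_rhs a) d).

Record KB := mkKB { tbox : seq cgci; kbn : BN }.

Record PInterp := mkPI {
  pidx : finType;
  pint : pidx -> VInterp;
  pprob : pidx -> R;
  pprob_gt0 : forall i, 0 < pprob i;
  pprob_sum1 : \sum_(i : pidx) pprob i = 1
}.

Fixpoint in_tbox (a : cgci) (s : seq cgci) : Prop :=
  if s is b :: s' then b = a \/ in_tbox a s' else False.

Definition is_model (K : KB) (P : PInterp) : Prop :=
  (forall i, forall a, in_tbox a (tbox K) -> sat_gci (pint P i) a) /\
  (forall w : world, \sum_(i : pidx P | vworld (pint P i) == w) pprob P i = PB (kbn K) w).

Definition consistent (K : KB) : Prop := exists P, is_model K P.

Definition PK (K : KB) (C D : concept) (phi : cctx) : R :=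
  inf [set r : R | exists P : PInterp, is_model K P /\
        r = \sum_(i : pidx P | `[< sat_gci (pint P i) (CGCI C D phi) >]) pprob P i].

Definition PKcond (K : KB) (C D : concept) (kappa lambda : cctx) : R :=
  inf [set r : R | exists P : PInterp, is_model K P /\
        r = (PBc (kbn K) lambda)^-1 *
            \sum_(i : pidx P | csat (vworld (pint P i)) lambda &&
                               `[< sat_gci (pint P i) (CGCI C D kappa) >]) pprob P i].

End BALC.

Arguments PB {R V Val} B w.
Arguments PBc {R V Val} B phi.
Arguments cand {V Val} phi psi.
Arguments csat {V Val} w phi.
Arguments kbn {R V Val NC NR} k.
Arguments tbox {R V Val NC NR} k.
Arguments consistent {R V Val NC NR} K.
Arguments is_model {R V Val NC NR} K P.
Arguments PK {R V Val NC NR} K C D phi.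
Arguments PKcond {R V Val NC NR} K C D kappa lambda.

From HB Require Import structures.
From mathcomp Require Import all_boot all_order all_algebra.
From mathcomp Require Import boolp classical_sets reals.
Import Order.TTheory GRing.Theory Num.Theory.
Local Open Scope classical_set_scope.
Local Open Scope ring_scope.

(* In every model, the interpretations satisfying (C ⊑ D)^(λ ∧ κ) are those whose world
   falsifies λ, of total mass 1 - P_B(λ), together with those satisfying both λ and
   (C ⊑ D)^κ.  Both probabilities are infima over the same set of models, and x ↦ a + b x
   with b = P_B(λ) > 0 commutes with infima, so
   P_K((C ⊑ D)^(λ ∧ κ)) = 1 - P_B(λ) + P_B(λ) · P_K((C ⊑ D)^κ | λ). *)

Local Arguments pidx {R V Val NC NR} _.
Local Arguments pint {R V Val NC NR} _ _.
Local Arguments pprob {R V Val NC NR} _ _.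
Local Arguments pprob_gt0 {R V Val NC NR} _ _.
Local Arguments pprob_sum1 {R V Val NC NR} _.
Local Arguments vworld {V Val NC NR} _.
Local Arguments sat_gci {V Val NC NR} _ _.
Local Arguments CGCI {V Val NC NR} _ _ _.
Local Arguments psat {V Val} _ _.

Lemma inf_affine (R : realType) (E : set R) (a b : R) :
  0 < b -> E !=set0 -> has_lbound E ->
  inf [set a + b * e | e in E] = a + b * inf E.
Proof.
move=> b_gt0 [e0 Ee0] [l lbE].
have F_neq0 : [set a + b * e | e in E] !=set0 by exists (a + b * e0), e0.
have lbF : has_lbound [set a + b * e | e in E].
  by exists (a + b * l) => _ [e Ee <-]; rewrite lerD2l ler_pM2l // lbE.
apply: le_anti; apply/andP; split; last first.
  apply: lb_le_inf => // _ [e Ee <-].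
  by rewrite lerD2l ler_pM2l //; apply: ge_inf; [exists l|].
rewrite -lerBlDl -ler_pdivrMl //; apply: lb_le_inf; first by exists e0.
move=> e Ee; rewrite ler_pdivrMl // lerBlDl.
by apply: ge_inf => //; exists e.
Qed.

Section BALCProbability.
Variables (R : realType) (V : finType) (Val : V -> finType) (NC NR : Type).
Implicit Types (w : {dffun forall X : V, Val X}) (k l : pctx V Val)
  (phi psi kappa lambda : cctx V Val) (K : KB R V Val NC NR)
  (P : PInterp R V Val NC NR) (C D : concept NC NR).

Lemma psat_setU w k l : psat w (k :|: l) = psat w k && psat w l.
Proof.
apply/idP/andP.
- move=> /forall_inP satkl; split; apply/forall_inP => p pk; apply: satkl;
  by rewrite finset.in_setU pk ?orbT.
- case=> /forall_inP satk /forall_inP satl; apply/forall_inP => p.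
  by rewrite finset.in_setU => /orP [] ?; [apply: satk | apply: satl].
Qed.

Lemma csat_cand w phi psi : csat w (cand phi psi) = csat w phi && csat w psi.
Proof.
apply/idP/andP.
- move=> /existsP [_ /andP [/finset.imset2P [k l phik psil ->]]].
  rewrite psat_setU => /andP [satk satl].
  by split; apply/existsP; [exists k | exists l]; rewrite ?phik ?psil.
- case=> /existsP [k /andP [phik satk]] /existsP [l /andP [psil satl]].
  apply/existsP; exists (k :|: l); rewrite psat_setU satk satl !andbT.
  by apply/finset.imset2P; exists k l.
Qed.

Lemma sat_gci_cand (I : VInterp V Val NC NR) C D kappa lambda :
  `[< sat_gci I (CGCI C D (cand lambda kappa)) >] =
  ~~ csat (vworld I) lambda || `[< sat_gci I (CGCI C D kappa) >].
Proof.
rewrite /sat_gci /= csat_cand negb_and.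
case: (csat _ lambda) => /=; last by apply/asboolP; left.
by apply/asboolP/asboolP.
Qed.

Lemma sum_pprob_csat {K P} phi : is_model K P ->
  \sum_(i | csat (vworld (pint P i)) phi) pprob P i = PBc (kbn K) phi.
Proof.
move=> [_ marginal].
rewrite (partition_big (fun i => vworld (pint P i)) (fun w => csat w phi)) //.
apply: eq_bigr => w satw; rewrite -marginal; apply: eq_bigl => i.
by case: eqVneq => [->|_]; rewrite ?satw ?andbF.
Qed.

Lemma sum_pprob_ncsat {K P} phi : is_model K P ->
  \sum_(i | ~~ csat (vworld (pint P i)) phi) pprob P i = 1 - PBc (kbn K) phi.
Proof.
move=> modelP; rewrite -(sum_pprob_csat phi modelP) -(pprob_sum1 P).
by rewrite [in RHS](bigID (fun i => csat (vworld (pint P i)) phi)) /= addrC addrK.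
Qed.

Lemma sum_pprob_sat_cand {K P} C D kappa lambda : is_model K P ->
  \sum_(i | `[< sat_gci (pint P i) (CGCI C D (cand lambda kappa)) >]) pprob P i
  = (1 - PBc (kbn K) lambda) +
    \sum_(i | csat (vworld (pint P i)) lambda &&
              `[< sat_gci (pint P i) (CGCI C D kappa) >]) pprob P i.
Proof.
move=> modelP; rewrite -(sum_pprob_ncsat lambda modelP).
rewrite (bigID (fun i => csat (vworld (pint P i)) lambda)) /= addrC.
congr (_ + _); apply: eq_bigl => i; rewrite sat_gci_cand;
  by case: (csat _ lambda); rewrite /= ?andbT ?andbF.
Qed.

Lemma PK_candE K C D kappa lambda :
  consistent K -> 0 < PBc (kbn K) lambda ->
  PK K C D (cand lambda kappa) =
  (1 - PBc (kbn K) lambda) + PBc (kbn K) lambda * PKcond K C D kappa lambda.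
Proof.
move=> [P0 modelP0] p_gt0; rewrite /PK /PKcond.
rewrite -inf_affine //; last 2 first.
- by eexists; exists P0.
- exists 0 => _ [P [_ ->]]; apply: mulr_ge0; first by rewrite invr_ge0 ltW.
  by apply: sumr_ge0 => i _; apply: ltW; apply: pprob_gt0.
congr inf; rewrite eqEsubset; split => r.
- move=> [P [modelP ->]]; rewrite (sum_pprob_sat_cand _ _ _ _ modelP).
  rewrite -[\sum_(i | csat _ _ && _) _](mulVKf (lt0r_neq0 p_gt0)).
  by eexists; first by exists P.
- move=> [_ [P [modelP ->]] <-]; exists P; split => //.
  by rewrite (sum_pprob_sat_cand _ _ _ _ modelP) mulVKf ?lt0r_neq0.
Qed.

End BALCProbability.

Theorem mainTheorem12 (R : realType) (V : finType) (Val : V -> finType)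
  (NC NR : Type) (K : KB R V Val NC NR) (C D : concept NC NR)
  (kappa lambda : cctx V Val) :
  consistent K ->
  kappa != finset.set0 -> lambda != finset.set0 ->
  0 < PBc (kbn K) lambda ->
  (0 < PKcond K C D kappa lambda <->
   1 - PBc (kbn K) lambda < PK K C D (cand lambda kappa)).
Proof.
move=> consK _ _ p_gt0.
by rewrite PK_candE // ltrDl pmulr_rgt0.
Qed.
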